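(* Let $k\ge1$ be an integer, $p_{\max}\in(0,1)$ and $\lambda_k>0$. Let items $X_i\sim\operatorname{Ber}(p_i,s_i)$ with $s_i\in\left(\frac{1}{k+1},\frac1k\right]$, $p_i\in(0,p_{\max}]$ and $\frac{1}{\lambda_k}\ln\frac{1}{1-p_i}\le1$ be packed, in order, by an Any-Fit algorithm applied to the real values $\frac{1}{\lambda_k}\ln\frac{1}{1-p_i}$ (bins of capacity 1), producing bins $\mathcal{B}_1,\dots,\mathcal{B}_m$ with $m\ge2$. Then $\frac1m\sum_{j=1}^m\sum_{i\in\mathcal{B}_j}p_is_i>\frac{\lambda_k(1-p_{\max})}{2(k+1)}$.
   Context: $X\sim\operatorname{Ber}(p,s)$ means $X=s$ with probability $p$ and $0$ otherwise. An Any-Fit algorithm processes real values in $[0,1]$ one by one, keeps every bin's total at most $1$, and opens a new bin only if the current value fits into no already opened bin. *)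

From mathcomp Require Import all_boot all_order all_algebra.
From mathcomp Require Import all_classical all_reals all_analysis.
Set Implicit Arguments. Unset Strict Implicit. Unset Printing Implicit Defensive.
Import Order.TTheory GRing.Theory Num.Theory.
Local Open Scope ring_scope.

Section AnyFit.
Variable R : realType.

(* Items are indexed 0,1,2,...; item i has size v i and is put in bin a i
   (bins numbered 0,1,2,... in the order they are opened). *)

Definition load (v : nat -> R) (a : nat -> nat) (j i : nat) : R :=
  \sum_(l < i | a l == j) v l.

(* number of bins opened before item i is processed *)
Fixpoint nbins (a : nat -> nat) (i : nat) : nat :=
  match i with
  | 0 => 0
  | i'.+1 => if a i' == nbins a i' then (nbins a i').+1 else nbins a i'
  end.

(* a is a run of some Any-Fit algorithm on items 0..n-1 with sizes v:
   each item goes either into an already opened bin (index < nbins)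
   or into a newly opened bin (index = nbins); the bin's total stays <= 1;
   and a new bin is opened only if the item fits into no opened bin. *)
Definition any_fit (v : nat -> R) (n : nat) (a : nat -> nat) : Prop :=
  forall i, (i < n)%N ->
    [/\ (a i <= nbins a i)%N,
        load v a (a i) i + v i <= 1 &
        (a i = nbins a i ->
           forall j, (j < nbins a i)%N -> 1 < load v a j i + v i)].

End AnyFit.

(* Any two opened bins together have load greater than 1: the item that opened
   the later bin did not fit into the earlier one.  Pairing the bins cyclically,
   the total load of m bins exceeds m/2.  Each item weighs
   p s >= (1 - pmax) ln (1/(1 - p)) / (k + 1), i.e. at least
   lam (1 - pmax) / (k + 1) times its size in the packing, so the average
   weight per bin exceeds lam (1 - pmax) / (2 (k + 1)). *)
From mathcomp Require Import all_boot all_order all_algebra.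
From mathcomp Require Import all_classical all_reals all_analysis.
From mathcomp Require Import ring lra.
Import Order.TTheory GRing.Theory Num.Theory.
Local Open Scope ring_scope.

Section AnyFitLoads.
Context {R : realType} {v : nat -> R} {a : nat -> nat}.

Lemma loadS j i : load v a j i.+1 = load v a j i + (if a i == j then v i else 0).
Proof. by rewrite /load !(big_mkcond (fun l : 'I__ => a l == j)) big_ord_recr. Qed.

Context {n : nat}.
Hypothesis v_ge0 : forall i, (i < n)%N -> 0 <= v i.

Lemma load_ge0 j i : (i <= n)%N -> 0 <= load v a j i.
Proof.
by move=> le_in; apply: sumr_ge0 => l _; apply/v_ge0/(leq_trans (ltn_ord l)).
Qed.

Lemma load_le j {i i'} : (i <= i' <= n)%N -> load v a j i <= load v a j i'.
Proof.
case/andP=> + le_i'n; elim: i' le_i'n => [|i' IH] le_i'n.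
  by rewrite leqn0 => /eqP->.
rewrite leq_eqVlt => /orP[/eqP-> //|]; rewrite ltnS => le_ii'.
rewrite loadS; apply: le_trans (IH (ltnW le_i'n) le_ii') _.
by rewrite lerDl; case: eqP => // _; apply: v_ge0.
Qed.

Lemma nbins_opened {j} : (j < nbins a n)%N ->
  exists2 i, (i < n)%N & a i = j /\ nbins a i = j.
Proof.
elim: n => [//|i IH] /=.
have widen i' : (i' < i)%N -> (i' < i.+1)%N by apply: ltnW.
case: eqP => [ai_new|_ /IH[i' /widen]]; last by exists i'.
rewrite ltnS leq_eqVlt => /orP[/eqP->|/IH[i' /widen]]; last by exists i'.
by exists i.
Qed.

Lemma any_fit_load_pair : any_fit v n a -> forall j j',
  (j < j')%N -> (j' < nbins a n)%N -> 1 < load v a j n + load v a j' n.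
Proof.
move=> af j j' lt_jj' lt_j'm; have [i lt_in [ai_j' nbi_j']] := nbins_opened lt_j'm.
have [_ _ /(_ (etrans ai_j' (esym nbi_j')) j)] := af i lt_in.
rewrite nbi_j' => /(_ lt_jj') /lt_le_trans; apply; apply: lerD.
  by apply: load_le; rewrite (ltnW lt_in) leqnn.
have load_i_n : load v a j' i.+1 <= load v a j' n.
  by apply: load_le; rewrite lt_in leqnn.
apply: le_trans load_i_n.
by rewrite loadS ai_j' eqxx lerDr load_ge0 // ltnW.
Qed.

End AnyFitLoads.

Lemma pairwise_gt1_sum_gt {R : numDomainType} (L : nat -> R) {m} : (2 <= m)%N ->
  (forall j j', (j < j')%N -> (j' < m)%N -> 1 < L j + L j') ->
  m%:R < 2 * \sum_(j < m) L j.
Proof.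
case: m => [//|m] lt1m L_gt1.
have -> : 2 * \sum_(j < m.+1) L j = \sum_(i < m) (L i + L i.+1) + (L 0%N + L m).
  rewrite big_split /= mulr_natl mulr2n {1}big_ord_recl big_ord_recr /=.
  by ring.
rewrite -addn1 natrD; apply: ler_ltD; last exact: L_gt1.
rewrite -[m in m%:R]card_ord -sumr_const; apply: ler_sum => i _.
by apply: ltW; apply: L_gt1; rewrite ltnS ?ltn_ord.
Qed.

Lemma ln_inv1B_ge0 {R : realType} {p : R} : 0 <= p < 1 -> 0 <= ln ((1 - p)^-1).
Proof. by move=> /andP[p_ge0 p_lt1]; apply: ln_ge0; rewrite invf_ge1; lra. Qed.

(* ln x <= x - 1 at x = 1/(1 - p) *)
Lemma mul1B_ln_inv1B_le {R : realType} {p : R} :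
  0 <= p < 1 -> (1 - p) * ln ((1 - p)^-1) <= p.
Proof.
move=> /andP[p_ge0 p_lt1]; have q_gt0 : 0 < 1 - p by lra.
have -> : (1 - p)^-1 = 1 + p / (1 - p) by field; lra.
rewrite -ler_pdivlMl // [_^-1 * p]mulrC; apply: le_ln1Dx.
exact: lt_le_trans (ltrN10 R) (divr_ge0 p_ge0 (ltW q_gt0)).
Qed.

Lemma scaled_ln_inv1B_le_mul {R : realType} (K lam pmax p s : R) :
  0 < K -> 0 < lam -> 0 <= p <= pmax -> pmax < 1 -> K^-1 <= s ->
  lam * (1 - pmax) / K * (lam^-1 * ln ((1 - p)^-1)) <= p * s.
Proof.
move=> K_gt0 lam_gt0 /andP[p_ge0 p_le] pmax_lt1 s_ge.
have p01 : 0 <= p < 1 by apply/andP; split; lra.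
have -> : lam * (1 - pmax) / K * (lam^-1 * ln ((1 - p)^-1)) =
    (1 - pmax) * ln ((1 - p)^-1) * K^-1 by field; rewrite !gt_eqF.
have ln_ge0 := ln_inv1B_ge0 p01.
apply: ler_pM => //.
- by rewrite mulr_ge0 // subr_ge0 ltW.
- by rewrite invr_ge0 ltW.
- apply: le_trans (mul1B_ln_inv1B_le p01).
  by apply: ler_wpM2r => //; lra.
Qed.

Lemma half_lt_mean {R : realFieldType} (c m X W : R) :
  0 < c -> 0 < m -> m < 2 * X -> c * X <= W -> c / 2 < m^-1 * W.
Proof.
move=> c_gt0 m_gt0 lt_m2X le_cXW.
rewrite -[c / 2](mulKf (lt0r_neq0 m_gt0)) ltr_pM2l ?invr_gt0 //.
apply: lt_le_trans le_cXW; rewrite mulrCA ltr_pM2l //; lra.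
Qed.

Theorem lemma9 (R : realType) (k : nat) (pmax lam : R) (n : nat)
    (p s : nat -> R) (a : nat -> nat) :
  (1 <= k)%N ->
  0 < pmax < 1 ->
  0 < lam ->
  (forall i, (i < n)%N -> (k.+1%:R)^-1 < s i <= (k%:R)^-1) ->
  (forall i, (i < n)%N -> 0 < p i <= pmax) ->
  (forall i, (i < n)%N -> lam^-1 * ln ((1 - p i)^-1) <= 1) ->
  any_fit (fun i => lam^-1 * ln ((1 - p i)^-1)) n a ->
  (2 <= nbins a n)%N ->
  (nbins a n)%:R^-1 * (\sum_(j < nbins a n) \sum_(i < n | a i == j) p i * s i)
    > lam * (1 - pmax) / (2 * k.+1%:R).
Proof.
move=> _ /andP[pmax_gt0 pmax_lt1] lam_gt0 s_bnd p_bnd _ af le2m.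
set v := fun i => lam^-1 * ln ((1 - p i)^-1).
set c := lam * (1 - pmax) / k.+1%:R.
have k1_gt0 : (0 : R) < k.+1%:R by rewrite ltr0n.
have p_bnd' i : (i < n)%N -> 0 <= p i <= pmax.
  by move=> /p_bnd/andP[/ltW -> ->].
have v_ge0 i : (i < n)%N -> 0 <= v i.
  move=> /p_bnd'/andP[p_ge0 p_le]; rewrite /v mulr_ge0 ?invr_ge0 ?(ltW lam_gt0) //.
  by apply: ln_inv1B_ge0; apply/andP; split; lra.
have weights_ge : c * \sum_(j < nbins a n) load v a j n <=
    \sum_(j < nbins a n) \sum_(i < n | a i == j) p i * s i.
  rewrite mulr_sumr; apply: ler_sum => j _; rewrite mulr_sumr.
  apply: ler_sum => i _; have lt_in := ltn_ord i.
  have /andP[/ltW s_ge _] := s_bnd i lt_in.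
  exact: scaled_ln_inv1B_le_mul (p_bnd' i lt_in) pmax_lt1 s_ge.
have -> : lam * (1 - pmax) / (2 * k.+1%:R) = c / 2.
  by rewrite /c; field; rewrite gt_eqF.
apply: half_lt_mean weights_ge.
- by rewrite /c !(divr_gt0, mulr_gt0) // subr_gt0.
- by rewrite ltr0n (leq_trans _ le2m).
- exact: pairwise_gt1_sum_gt le2m (any_fit_load_pair v_ge0 af).
Qed.
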